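(* Let $V$ be finite and let $\mathbb{M}=(M,A)$, $\mathbb{M}'=(M',A')$ be dependence models for $(V,\tau)$. A non-empty relation $Z\subseteq A\times A'$ is a dependence bisimulation if and only if for every $(s,s')\in Z$: (a) $s\models P\mathbf{x}$ iff $s'\models P\mathbf{x}$ for all $P\in\tau$, $\mathbf{x}\in V^{ar(P)}$; (b) $s\models D_Xy$ iff $s'\models D_Xy$ for all $X\cup\{y\}\subseteq V$; (c) for every $t\in A$ there is $t'\in A'$ with $s'=_{V^{s,t}}t'$ and $(t,t')\in Z$; (d) for every $t'\in A'$ there is $t\in A$ with $s=_{V^{s',t'}}t$ and $(t,t')\in Z$.
   Context: A vocabulary is a pair $(V,\tau)$ of a set of variables $V$ and a relational language $\tau$ with arity map $ar$. A dependence model is a pair $\mathbb{M}=(M,A)$ with $M$ a $\tau$-structure with domain $O$ and $A\subseteq O^V$ a set of assignments (the team). For $X\subseteq V$ and $s,t\in A$, $s=_Xt$ means $s\restriction X=t\restriction X$. Semantics at $s\in A$: $s\models P\mathbf{x}$ iff $s(\mathbf{x})\in P^M$; $s\models D_Xy$ iff for all $t\in A$, $s=_Xt$ implies $s(y)=t(y)$. For $s,t\in A$ let $V^{s,t}=\{v\in V\mid s(v)=t(v)\}$. A set $X\subseteq V$ is dependence-closed at $s'$ if for all $y\in V$, $s'\models D_Xy$ implies $y\in X$. A non-empty relation $Z\subseteq A\times A'$ is a dependence bisimulation if for every $(s,s')\in Z$: (Atom) $s\models P\mathbf{x}$ iff $s'\models P\mathbf{x}$ for all $P\in\tau$, $\mathbf{x}\in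 V^{ar(P)}$; (Forth) for every $t\in A$, $V^{s,t}$ is dependence-closed at $s'$ and there is $t'\in A'$ with $s'=_{V^{s,t}}t'$ and $(t,t')\in Z$; (Back) for every $t'\in A'$, $V^{s',t'}$ is dependence-closed at $s$ and there is $t\in A$ with $s=_{V^{s',t'}}t$ and $(t,t')\in Z$. *)

From mathcomp Require Import all_boot.
Set Implicit Arguments. Unset Strict Implicit. Unset Printing Implicit Defensive.

(* A tau-structure with domain O is given by interp : forall P, ('I_(ar P) -> O) -> Prop
   (the set P^M of ar(P)-tuples).  An assignment is a map V -> O; a team is a set
   of assignments A : (V -> O) -> Prop.  Sets of variables X are predicates on V. *)

Section Dep.
Variables (V : finType) (tau : Type) (ar : tau -> nat).

Definition agree_on {O : Type} (X : V -> Prop) (s t : V -> O) : Prop :=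
  forall v, X v -> s v = t v.

Definition agree_set {O : Type} (s t : V -> O) : V -> Prop := fun v => s v = t v.

Definition sat_atom {O : Type} (interp : forall P : tau, ('I_(ar P) -> O) -> Prop)
  (s : V -> O) (P : tau) (x : 'I_(ar P) -> V) : Prop :=
  interp P (fun i => s (x i)).

Definition sat_dep {O : Type} (A : (V -> O) -> Prop) (s : V -> O)
  (X : V -> Prop) (y : V) : Prop :=
  forall t, A t -> agree_on X s t -> s y = t y.

Definition dep_closed {O : Type} (A : (V -> O) -> Prop) (s : V -> O)
  (X : V -> Prop) : Prop :=
  forall y, sat_dep A s X y -> X y.

Definition dep_bisim {O O' : Type}
  (I : forall P : tau, ('I_(ar P) -> O) -> Prop) (A : (V -> O) -> Prop)
  (I' : forall P : tau, ('I_(ar P) -> O') -> Prop) (A' : (V -> O') -> Prop)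
  (Z : (V -> O) -> (V -> O') -> Prop) : Prop :=
  (exists s s', Z s s') /\
  (forall s s', Z s s' -> A s /\ A' s') /\
  (forall s s', Z s s' ->
     (forall (P : tau) (x : 'I_(ar P) -> V), sat_atom I s x <-> sat_atom I' s' x) /\
     (forall t, A t ->
        dep_closed A' s' (agree_set s t) /\
        exists t', A' t' /\ agree_on (agree_set s t) s' t' /\ Z t t') /\
     (forall t', A' t' ->
        dep_closed A s (agree_set s' t') /\
        exists t, A t /\ agree_on (agree_set s' t') s t /\ Z t t')).

End Dep.

From mathcomp Require Import all_boot.
Set Implicit Arguments. Unset Strict Implicit.

(* A dependence bisimulation asks, in its forth/back clauses, that the
   agreement sets V^{s,t} be dependence-closed at the partner assignment.

   The whole argument is one equivalence, proved for an arbitrary pair of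
   teams A, A' and assignments s, s':
       every agreement set V^{s',t'} (t' in A') is dependence-closed at s in A
     <-> every dependence atom true at s in A is true at s' in A'.
   It rests on two elementary facts: dependence atoms are monotone in the
   determining set X, and an agreement set V^{s,t} is always dependence-closed
   at s in its own team (t itself witnesses it).  The main theorem applies the
   equivalence once in each direction (to the back and forth clauses). *)

Section DependenceAtoms.
Variable V : finType.

Lemma sat_dep_mono (O : Type) (A : (V -> O) -> Prop) (s : V -> O)
  (X Y : V -> Prop) (y : V) :
  (forall v, X v -> Y v) -> sat_dep A s X y -> sat_dep A s Y y.
Proof. by move=> XY Dy t At sYt; apply: Dy => // v /XY; apply: sYt. Qed.

(* V^{s,t} is dependence-closed at s in any team containing t:
   if s |= D_{V^{s,t}} y then, testing the atom on t itself, s y = t y. *)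
Lemma agree_set_dep_closed (O : Type) (A : (V -> O) -> Prop) (s t : V -> O) :
  A t -> dep_closed A s (agree_set s t).
Proof. by move=> At y Dy; apply: Dy. Qed.

Lemma dep_closed_agree_sets_iff (O O' : Type)
  (A : (V -> O) -> Prop) (A' : (V -> O') -> Prop) (s : V -> O) (s' : V -> O') :
  (forall t', A' t' -> dep_closed A s (agree_set s' t')) <->
  (forall (X : V -> Prop) (y : V), sat_dep A s X y -> sat_dep A' s' X y).
Proof.
split=> [closed X y Dy t' At' s't' | transfer t' At' y Dy].
- (* X is contained in V^{s',t'}, which is closed at s, so it contains y. *)
  by apply: (closed t' At'); apply: sat_dep_mono Dy.
- (* Transport the atom to s' and use closedness of V^{s',t'} in A'. *)
  by apply: (agree_set_dep_closed At'); apply: transfer.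
Qed.

End DependenceAtoms.

Theorem mainTheorem2 (V : finType) (tau : Type) (ar : tau -> nat)
  (O : Type) (I : forall P : tau, ('I_(ar P) -> O) -> Prop) (A : (V -> O) -> Prop)
  (O' : Type) (I' : forall P : tau, ('I_(ar P) -> O') -> Prop) (A' : (V -> O') -> Prop)
  (Z : (V -> O) -> (V -> O') -> Prop)
  (HZ : forall s s', Z s s' -> A s /\ A' s')
  (Hne : exists s s', Z s s') :
  dep_bisim I A I' A' Z <->
  (forall s s', Z s s' ->
     (forall (P : tau) (x : 'I_(ar P) -> V),
        sat_atom I s x <-> sat_atom I' s' x) /\
     (forall (X : V -> Prop) (y : V), sat_dep A s X y <-> sat_dep A' s' X y) /\
     (forall t, A t -> exists t', A' t' /\ agree_on (agree_set s t) s' t' /\ Z t t') /\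
     (forall t', A' t' -> exists t, A t /\ agree_on (agree_set s' t') s t /\ Z t t')).
Proof.
split=> [[_ [_ bisim]] s s' Zss' | conds].
- have [atoms [forth back]] := bisim s s' Zss'.
  have to' := proj1 (dep_closed_agree_sets_iff A A' s s') (fun t' At' => (back t' At').1).
  have to := proj1 (dep_closed_agree_sets_iff A' A s' s) (fun t At => (forth t At).1).
  split=> //; split; first by move=> X y; split; [apply: to' | apply: to].
  by split=> [t /forth [] | t' /back []].
- split=> //; split=> // s s' Zss'.
  have [atoms [deps [forth back]]] := conds s s' Zss'.
  have closed' := proj2 (dep_closed_agree_sets_iff A' A s' s) (fun X y => proj2 (deps X y)).
  have closed := proj2 (dep_closed_agree_sets_iff A A' s s') (fun X y => proj1 (deps X y)).
  split=> //; split=> [t At | t' At'].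
  + by split; [apply: closed' | apply: forth].
  + by split; [apply: closed | apply: back].
Qed.
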